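(* Consider the extreme Kerr case $Q=0$, $M=|a|>0$. If for some half-integer $k$ there is an energy eigenvalue $\omega\in\mathbb{R}$ (a bound state of a Dirac particle of rest mass $m>0$), then $Mm>\frac14$.
   Context: Fix real numbers $M>0$, $a$, $Q$ with $M^2=a^2+Q^2$ and put $\rho:=M$. Fix the rest mass $m>0$ and charge $e\in\mathbb{R}$ of a Dirac particle and a half-integer $k\in\{\pm\frac12,\pm\frac32,\dots\}$. For $\omega,\lambda\in\mathbb{R}$ consider the radial system for $f:(\rho,\infty)\to\mathbb{C}^2$, $$\begin{pmatrix}(r-\rho)\frac{d}{dr}+\frac{iV(r)}{r-\rho} & imr-\lambda\\ -imr-\lambda & (r-\rho)\frac{d}{dr}-\frac{iV(r)}{r-\rho}\end{pmatrix}f(r)=0,\qquad V(r):=\omega(r^2+a^2)+ka+eQr,$$ and the angular system for $g:(0,\pi)\to\mathbb{C}^2$, $$\begin{pmatrix}\frac{d}{d\theta}+\frac{\cot\theta}{2}-W(\theta) & -am\cos\theta+\lambda\\ am\cos\theta+\lambda & -\frac{d}{d\theta}-\frac{\cot\theta}{2}-W(\theta)\end{pmatrix}g(\theta)=0,\qquad W(\theta):=a\omega\sin\theta+\frac{k}{\sin\theta}.$$ A number $\omega\in\mathbb{R}$ is called an energy eigenvalue (for azimuthal quantum number $k$) if there exist $\lambda\in\mathbb{R}$ and nontrivial solutions $f$ of the radial system and $g$ of the angular system with $$\int_\rho^\infty|f(r)|^2\frac{r^2+a^2}{(r-\rho)^2}\,dr<\infty,\qquad\int_0^\pi|g(\theta)|^2\sin\theta\,d\theta<\infty.$$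 *)

From Stdlib Require Import Reals Lra ZArith.
From Coquelicot Require Import Coquelicot.
Open Scope R_scope.

Definition C_is_derive (f : R -> C) (x : R) (l : C) : Prop :=
  is_derive (fun t => Re (f t)) x (Re l) /\ is_derive (fun t => Im (f t)) x (Im l).

Definition half_integer (k : R) : Prop := exists n : Z, k = IZR n + /2.

Definition Vrad (a Q e omega k r : R) : R :=
  omega * (r ^ 2 + a ^ 2) + k * a + e * Q * r.

Definition Wang (a omega k th : R) : R :=
  a * omega * sin th + k / sin th.

Definition cotan (th : R) : R := cos th / sin th.

Definition radial_solution (M a Q m e k omega lambda : R) (f1 f2 : R -> C) : Prop :=
  let rho := M in
  forall r, rho < r ->
    exists d1 d2 : C,
      C_is_derive f1 r d1 /\ C_is_derive f2 r d2 /\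
      (RtoC (r - rho) * d1 + Ci * RtoC (Vrad a Q e omega k r / (r - rho)) * f1 r
         + (Ci * RtoC (m * r) - RtoC lambda) * f2 r = 0)%C /\
      ((- (Ci * RtoC (m * r)) - RtoC lambda) * f1 r + RtoC (r - rho) * d2
         - Ci * RtoC (Vrad a Q e omega k r / (r - rho)) * f2 r = 0)%C.

Definition angular_solution (a m k omega lambda : R) (g1 g2 : R -> C) : Prop :=
  forall th, 0 < th < PI ->
    exists d1 d2 : C,
      C_is_derive g1 th d1 /\ C_is_derive g2 th d2 /\
      (d1 + RtoC (cotan th / 2) * g1 th - RtoC (Wang a omega k th) * g1 th
         + RtoC (- (a * m * cos th) + lambda) * g2 th = 0)%C /\
      (RtoC (a * m * cos th + lambda) * g1 th - d2 - RtoC (cotan th / 2) * g2 th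
         - RtoC (Wang a omega k th) * g2 th = 0)%C.

Definition normsq2 (z1 z2 : C) : R := (Cmod z1) ^ 2 + (Cmod z2) ^ 2.

Definition energy_eigenvalue (M a Q m e k omega : R) : Prop :=
  let rho := M in
  exists (lambda : R) (f1 f2 g1 g2 : R -> C),
    radial_solution M a Q m e k omega lambda f1 f2 /\
    (exists r, rho < r /\ (f1 r <> 0%C \/ f2 r <> 0%C)) /\
    ex_RInt_gen (fun r => normsq2 (f1 r) (f2 r) * (r ^ 2 + a ^ 2) / (r - rho) ^ 2)
      (at_right rho) (Rbar_locally p_infty) /\
    angular_solution a m k omega lambda g1 g2 /\
    (exists th, 0 < th < PI /\ (g1 th <> 0%C \/ g2 th <> 0%C)) /\
    ex_RInt_gen (fun th => normsq2 (g1 th) (g2 th) * sin th)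
      (at_right 0) (at_left PI).

From Stdlib Require Import Reals Lra Lia ZArith.
From Coquelicot Require Import Coquelicot.
Open Scope R_scope.

(* Write f1 = x1 + i y1, f2 = x2 + i y2, S = |f1|^2 + |f2|^2, X + i Y = conj f1 * f2 and
   W = V / (r - M). The radial system gives
     (r - M) S' = 4 (lam X + m r Y),  (r - M) X' = lam S - 2 W Y,  (r - M) Y' = m r S + 2 W X,
   so by Gronwall S never vanishes once it is nonzero somewhere.
   Near the horizon, Phi = V S + 2 (r - M) (m r X - lam Y) is close to V(M) S and
   |Phi'| <= L S. If V(M) <> 0, Gronwall applied to Phi / V(M) keeps S bounded below, and the
   weight (r - M)^-2 makes the norm diverge at r = M. Hence V(M) = 0, i.e. W = omega (r + M) + e Q.
   Then P = W S + 2 (m r X - lam Y) satisfies P' = omega S + 2 m X. If |omega| >= m (and e Q = 0),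
   P / omega is nondecreasing, eventually positive by Cauchy-Schwarz, and O(r S); so S >= c / r
   and the norm diverges at infinity. Thus |omega| < m, whereas V(M) = 0 reads |k| = 2 M |omega|
   in the extreme Kerr case, and |k| >= 1/2. *)

Lemma nondecreasing_of_derive_nonneg (g : R -> R) (x y : R) : x <= y ->
  (forall t, x <= t <= y -> exists d, is_derive g t d /\ 0 <= d) -> g x <= g y.
Proof.
  intros Hxy Hder.
  assert (HD : forall t, x <= t <= y -> is_derive g t (Derive g t) /\ 0 <= Derive g t).
  { intros t Ht. destruct (Hder t Ht) as [d [Hd Hd0]].
    rewrite (is_derive_unique g t d Hd). auto. }
  destruct (MVT_gen g x y (Derive g)) as [c [Hc Heq]];
    rewrite ?Rmin_left, ?Rmax_right in * by lra.
  - intros t Ht. apply HD. lra.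
  - intros t Ht. apply continuity_pt_filterlim, (ex_derive_continuous g).
    exists (Derive g t). apply HD, Ht.
  - destruct (HD c Hc) as [_ Hc0]. nra.
Qed.

(* [auto_derive] leaves the eta-expanded [Derive (fun y => f y) x], which
   [is_derive_unique] does not rewrite. *)
Lemma Derive_eq (f : R -> R) (x l : R) : is_derive f x l -> Derive (fun y : R => f y) x = l.
Proof. apply is_derive_unique. Qed.

Lemma is_derive_eq_value (f : R -> R) (x l l' : R) :
  is_derive f x l -> l = l' -> is_derive f x l'.
Proof. now intros H <-. Qed.

Lemma eq_div_of_mul_eq (u d N : R) : u <> 0 -> u * d = N -> d = N / u.
Proof. intros Hu <-. field. exact Hu. Qed.

Lemma exp_le_mono (x y : R) : x <= y -> exp x <= exp y.
Proof. intros [Hlt | ->]; [left; apply exp_increasing, Hlt | right; reflexivity]. Qed.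

Lemma gronwall_abs (g : R -> R) (K x y : R) : x <= y ->
  (forall t, x <= t <= y -> exists d, is_derive g t d /\ Rabs d <= K * g t) ->
  g y * exp (- K * (y - x)) <= g x /\ g x * exp (- K * (y - x)) <= g y.
Proof.
  intros Hxy Hder.
  assert (Hup : g x * exp (K * x) <= g y * exp (K * y)).
  { apply (nondecreasing_of_derive_nonneg (fun t => g t * exp (K * t))); auto.
    intros t Ht. destruct (Hder t Ht) as [d [Hd Hb]].
    exists ((d + K * g t) * exp (K * t)). split.
    - auto_derive; [exists d; auto|]. rewrite (Derive_eq g t d Hd). ring.
    - pose proof (Rle_abs (- d)). rewrite Rabs_Ropp in *.
      apply Rmult_le_pos; [lra | apply Rlt_le, exp_pos]. }
  assert (Hdown : g y * exp (- K * y) <= g x * exp (- K * x)).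
  { apply Ropp_le_cancel.
    apply (nondecreasing_of_derive_nonneg (fun t => - (g t * exp (- K * t)))); auto.
    intros t Ht. destruct (Hder t Ht) as [d [Hd Hb]].
    exists ((K * g t - d) * exp (- K * t)). split.
    - auto_derive; [exists d; auto|]. rewrite (Derive_eq g t d Hd). ring.
    - apply Rmult_le_pos; [pose proof (Rle_abs d); lra | apply Rlt_le, exp_pos]. }
  split.
  - apply Rle_trans with (g x * exp (- K * x) * exp (K * x)).
    + replace (- K * (y - x)) with (- K * y + K * x) by ring.
      rewrite exp_plus, <- Rmult_assoc.
      apply Rmult_le_compat_r; [apply Rlt_le, exp_pos | exact Hdown].
    + rewrite Rmult_assoc, <- exp_plus. replace (- K * x + K * x) with 0 by ring.
      rewrite exp_0. lra.
  - apply Rle_trans with (g y * exp (K * y) * exp (- K * y)).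
    + replace (- K * (y - x)) with (K * x + - K * y) by ring.
      rewrite exp_plus, <- Rmult_assoc.
      apply Rmult_le_compat_r; [apply Rlt_le, exp_pos | exact Hup].
    + rewrite Rmult_assoc, <- exp_plus. replace (K * y + - K * y) with 0 by ring.
      rewrite exp_0. lra.
Qed.

Lemma RInt_ge_const (f : R -> R) (a b c : R) : a <= b -> ex_RInt f a b ->
  (forall x, a < x < b -> c <= f x) -> c * (b - a) <= RInt f a b.
Proof.
  intros Hab Hf Hc.
  replace (c * (b - a)) with (RInt (fun _ => c) a b)
    by (rewrite RInt_const; apply Rmult_comm).
  apply RInt_le; auto. apply ex_RInt_const.
Qed.

Lemma is_RInt_gen_Cauchy_left {Fa Fb : (R -> Prop) -> Prop}
  {FFa : ProperFilter Fa} {FFb : ProperFilter Fb} (f : R -> R) (l eps : R) : 0 < eps ->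
  is_RInt_gen f Fa Fb l ->
  exists P, Fa P /\ forall a1 a2, P a1 -> P a2 ->
    ex_RInt f a1 a2 /\ Rabs (RInt f a1 a2) < eps.
Proof.
  intros Heps Hl.
  destruct (Hl _ (locally_ball l (pos_div_2 (mkposreal eps Heps))))
    as [P Q HP HQ Hall].
  exists P. split; auto. intros a1 a2 H1 H2.
  destruct (filter_ex Q HQ) as [b Hb].
  destruct (Hall a1 b H1 Hb) as [y1 [Hy1 Hb1]].
  destruct (Hall a2 b H2 Hb) as [y2 [Hy2 Hb2]].
  simpl in *.
  pose proof (is_RInt_Chasles f a1 b a2 y1 (opp y2) Hy1 (is_RInt_swap f b a2 y2 Hy2)) as H12.
  split; [eexists; exact H12|].
  rewrite (is_RInt_unique _ _ _ _ H12).
  change (Rabs (y1 - l) < eps / 2) in Hb1. change (Rabs (y2 - l) < eps / 2) in Hb2.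
  change (Rabs (y1 - y2) < eps).
  apply Rabs_def1; apply Rabs_def2 in Hb1; apply Rabs_def2 in Hb2; lra.
Qed.

Lemma is_RInt_gen_Cauchy_right {Fa Fb : (R -> Prop) -> Prop}
  {FFa : ProperFilter Fa} {FFb : ProperFilter Fb} (f : R -> R) (l eps : R) : 0 < eps ->
  is_RInt_gen f Fa Fb l ->
  exists Q, Fb Q /\ forall b1 b2, Q b1 -> Q b2 ->
    ex_RInt f b1 b2 /\ Rabs (RInt f b1 b2) < eps.
Proof.
  intros Heps Hl.
  exact (is_RInt_gen_Cauchy_left f (opp l) eps Heps (is_RInt_gen_swap f l Hl)).
Qed.

Lemma not_ex_RInt_gen_at_right_inv_sq {Fb : (R -> Prop) -> Prop} {FFb : ProperFilter Fb}
  (f : R -> R) (rho c delta : R) : 0 < c -> 0 < delta ->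
  (forall t, rho < t < rho + delta -> c / (t - rho) ^ 2 <= f t) ->
  ~ ex_RInt_gen f (at_right rho) Fb.
Proof.
  intros Hc Hdelta Hf [l Hl].
  destruct (is_RInt_gen_Cauchy_left (Fa := at_right rho) (Fb := Fb) f l (c / 4) ltac:(lra) Hl)
    as [P [[eta Heta] HP]].
  pose proof (cond_pos eta) as Heta0.
  set (h := Rmin (Rmin 1 (eta / 4)) (delta / 4)).
  assert (Hh : 0 < h /\ h <= 1 /\ h <= eta / 4 /\ h <= delta / 4).
  { unfold h. repeat split;
      try (apply Rmin_pos; try apply Rmin_pos; lra);
      eauto using Rle_trans, Rmin_l, Rmin_r. }
  assert (HPh : forall s, 0 < s <= 2 * h -> P (rho + s)).
  { intros s Hs. apply Heta; [|lra].
    change (Rabs (rho + s - rho) < eta). rewrite Rabs_pos_eq; lra. }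
  destruct (HP (rho + h) (rho + 2 * h)) as [Hex Hlt]; try (apply HPh; lra).
  assert (Hge : c / (2 * h) ^ 2 * (rho + 2 * h - (rho + h)) <= RInt f (rho + h) (rho + 2 * h)).
  { apply RInt_ge_const; auto; [lra|]. intros t Ht.
    apply Rle_trans with (c / (t - rho) ^ 2); [|apply Hf; lra].
    apply Rmult_le_compat_l; [lra|]. apply Rinv_le_contravar; [nra|]. nra. }
  replace (c / (2 * h) ^ 2 * (rho + 2 * h - (rho + h))) with (c / 4 / h) in Hge by (field; lra).
  assert (c / 4 <= c / 4 / h).
  { unfold Rdiv at 2. rewrite <- (Rmult_1_r (c / 4)) at 1.
    apply Rmult_le_compat_l; [lra|]. rewrite <- Rinv_1. apply Rinv_le_contravar; lra. }
  apply Rabs_def2 in Hlt. lra.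
Qed.

Lemma not_ex_RInt_gen_pinfty_inv {Fa : (R -> Prop) -> Prop} {FFa : ProperFilter Fa}
  (f : R -> R) (c T : R) : 0 < c ->
  (forall t, T < t -> c / t <= f t) ->
  ~ ex_RInt_gen f Fa (Rbar_locally p_infty).
Proof.
  intros Hc Hf [l Hl].
  destruct (is_RInt_gen_Cauchy_right (Fa := Fa) (Fb := Rbar_locally p_infty) f l (c / 2)
              ltac:(lra) Hl) as [Q [[B HB] HQ]].
  set (b := Rmax (Rmax B T) 0 + 1).
  assert (Hb : B < b /\ T < b /\ 0 < b).
  { unfold b. pose proof (Rmax_l (Rmax B T) 0). pose proof (Rmax_r (Rmax B T) 0).
    pose proof (Rmax_l B T). pose proof (Rmax_r B T). lra. }
  destruct (HQ b (2 * b)) as [Hex Hlt]; try (apply HB; lra).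
  assert (Hge : c / (2 * b) * (2 * b - b) <= RInt f b (2 * b)).
  { apply RInt_ge_const; auto; [lra|]. intros t Ht.
    apply Rle_trans with (c / t); [|apply Hf; lra].
    apply Rmult_le_compat_l; [lra|]. apply Rinv_le_contravar; lra. }
  replace (c / (2 * b) * (2 * b - b)) with (c / 2) in Hge by (field; lra).
  apply Rabs_def2 in Hlt. lra.
Qed.

Definition radial_real_system (rho m lam : R) (V x1 y1 x2 y2 : R -> R) : Prop :=
  forall t, rho < t ->
    is_derive x1 t ((V t / (t - rho) * y1 t + lam * x2 t + m * t * y2 t) / (t - rho)) /\
    is_derive y1 t ((- (V t / (t - rho)) * x1 t + lam * y2 t - m * t * x2 t) / (t - rho)) /\
    is_derive x2 t ((lam * x1 t - m * t * y1 t - V t / (t - rho) * y2 t) / (t - rho)) /\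
    is_derive y2 t ((m * t * x1 t + lam * y1 t + V t / (t - rho) * x2 t) / (t - rho)).

Section RadialDensity.

Variables (rho m lam : R) (V x1 y1 x2 y2 : R -> R).

Definition dens (t : R) : R := x1 t ^ 2 + y1 t ^ 2 + x2 t ^ 2 + y2 t ^ 2.

(* [cross_re + i cross_im] is [conj f1 * f2]. *)
Definition cross_re (t : R) : R := x1 t * x2 t + y1 t * y2 t.
Definition cross_im (t : R) : R := x1 t * y2 t - y1 t * x2 t.

Lemma dens_nonneg (t : R) : 0 <= dens t.
Proof. unfold dens. nra. Qed.

Lemma cross_comb_sq_le (alpha beta t : R) :
  4 * (alpha * cross_re t + beta * cross_im t) ^ 2 <= (alpha ^ 2 + beta ^ 2) * dens t ^ 2.
Proof.
  unfold cross_re, cross_im, dens.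
  set (X := x1 t * x2 t + y1 t * y2 t). set (Y := x1 t * y2 t - y1 t * x2 t).
  set (p := x1 t ^ 2 + y1 t ^ 2). set (q := x2 t ^ 2 + y2 t ^ 2).
  assert (Lagrange : X ^ 2 + Y ^ 2 = p * q) by (unfold X, Y, p, q; ring).
  assert (CS : (alpha * X + beta * Y) ^ 2 <= (alpha ^ 2 + beta ^ 2) * (X ^ 2 + Y ^ 2))
    by (pose proof (pow2_ge_0 (alpha * Y - beta * X)); nra).
  assert (AMGM : 4 * (p * q) <= (p + q) ^ 2) by (pose proof (pow2_ge_0 (p - q)); nra).
  replace (p + x2 t ^ 2 + y2 t ^ 2) with (p + q) by (unfold q; ring).
  assert (0 <= alpha ^ 2 + beta ^ 2) by nra.
  rewrite Lagrange in CS.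
  apply Rle_trans with ((alpha ^ 2 + beta ^ 2) * (4 * (p * q))); [lra|].
  apply Rmult_le_compat_l; lra.
Qed.

Lemma cross_comb_abs_le (alpha beta t : R) :
  2 * Rabs (alpha * cross_re t + beta * cross_im t) <= (Rabs alpha + Rabs beta) * dens t.
Proof.
  pose proof (cross_comb_sq_le alpha beta t) as Hsq.
  pose proof (dens_nonneg t). pose proof (Rabs_pos alpha). pose proof (Rabs_pos beta).
  apply Rsqr_incr_0_var; [|nra].
  rewrite !Rsqr_pow2, Rpow_mult_distr, pow2_abs.
  apply Rle_trans with ((alpha ^ 2 + beta ^ 2) * dens t ^ 2); [lra|].
  rewrite Rpow_mult_distr, <- (pow2_abs alpha), <- (pow2_abs beta).
  apply Rmult_le_compat_r; nra.
Qed.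

Lemma two_abs_cross_re_le (t : R) : 2 * Rabs (cross_re t) <= dens t.
Proof.
  pose proof (cross_comb_abs_le 1 0 t) as H.
  rewrite Rabs_R1, Rabs_R0, Rmult_0_l, Rplus_0_r, Rmult_1_l, Rplus_0_r, Rmult_1_l in H.
  exact H.
Qed.

Definition mass_current (t : R) : R := m * t * cross_re t - lam * cross_im t.

Lemma mass_current_abs_le (t : R) : 0 <= m * t ->
  2 * Rabs (mass_current t) <= (m * t + Rabs lam) * dens t.
Proof.
  intros Hmt. unfold mass_current.
  replace (m * t * cross_re t - lam * cross_im t) with (m * t * cross_re t + - lam * cross_im t)
    by ring.
  rewrite <- (Rabs_pos_eq (m * t)) at 2 by exact Hmt. rewrite <- (Rabs_Ropp lam).
  apply cross_comb_abs_le.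
Qed.

Lemma mass_current_sq_le (t : R) :
  4 * mass_current t ^ 2 <= ((m * t) ^ 2 + lam ^ 2) * dens t ^ 2.
Proof.
  unfold mass_current.
  replace (m * t * cross_re t - lam * cross_im t) with (m * t * cross_re t + - lam * cross_im t)
    by ring.
  replace (lam ^ 2) with ((- lam) ^ 2) by ring.
  apply cross_comb_sq_le.
Qed.

Hypothesis sys : radial_real_system rho m lam V x1 y1 x2 y2.

Ltac derive_along_solution t Ht :=
  destruct (sys t Ht) as (D1 & D2 & D3 & D4);
  auto_derive; [repeat split; eexists; eassumption|];
  rewrite (Derive_eq _ _ _ D1), (Derive_eq _ _ _ D2), (Derive_eq _ _ _ D3), (Derive_eq _ _ _ D4);
  unfold dens, cross_re, cross_im; field; lra.

Lemma is_derive_dens (t : R) : rho < t ->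
  is_derive dens t (4 * (lam * cross_re t + m * t * cross_im t) / (t - rho)).
Proof. intros Ht. unfold dens at 1. derive_along_solution t Ht. Qed.

Lemma is_derive_cross_re (t : R) : rho < t ->
  is_derive cross_re t ((lam * dens t - 2 * (V t / (t - rho)) * cross_im t) / (t - rho)).
Proof. intros Ht. unfold cross_re at 1. derive_along_solution t Ht. Qed.

Lemma is_derive_cross_im (t : R) : rho < t ->
  is_derive cross_im t ((m * t * dens t + 2 * (V t / (t - rho)) * cross_re t) / (t - rho)).
Proof. intros Ht. unfold cross_im at 1. derive_along_solution t Ht. Qed.

Lemma abs_derive_dens_le (x y s : R) : rho < x <= s -> s <= y ->
  Rabs (4 * (lam * cross_re s + m * s * cross_im s) / (s - rho))
  <= 2 * (Rabs lam + Rabs m * (Rabs x + Rabs y)) / (x - rho) * dens s.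
Proof.
  intros Hxs Hsy.
  pose proof (cross_comb_abs_le lam (m * s) s) as Hc.
  pose proof (Rabs_pos (lam * cross_re s + m * s * cross_im s)).
  assert (Hs_abs : Rabs s <= Rabs x + Rabs y) by (unfold Rabs; repeat destruct Rcase_abs; lra).
  pose proof (Rabs_pos lam). pose proof (Rabs_pos m). pose proof (dens_nonneg s).
  assert (Hcoef : (Rabs lam + Rabs (m * s)) * dens s
                  <= (Rabs lam + Rabs m * (Rabs x + Rabs y)) * dens s)
    by (rewrite Rabs_mult; apply Rmult_le_compat_r; nra).
  assert (Hinv : / (s - rho) <= / (x - rho)) by (apply Rinv_le_contravar; lra).
  unfold Rdiv.
  rewrite !Rabs_mult, (Rabs_pos_eq 4), Rabs_inv, (Rabs_pos_eq (s - rho)) by lra.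
  replace (4 * Rabs (lam * cross_re s + m * s * cross_im s) * / (s - rho))
    with (2 * (2 * Rabs (lam * cross_re s + m * s * cross_im s)) * / (s - rho)) by ring.
  replace (2 * (Rabs lam + Rabs m * (Rabs x + Rabs y)) * / (x - rho) * dens s)
    with (2 * ((Rabs lam + Rabs m * (Rabs x + Rabs y)) * dens s) * / (x - rho)) by ring.
  apply Rmult_le_compat; [lra | apply Rlt_le, Rinv_0_lt_compat; lra | lra | exact Hinv].
Qed.

Lemma dens_pos (r0 t : R) : rho < r0 -> 0 < dens r0 -> rho < t -> 0 < dens t.
Proof.
  intros Hr0 Hpos Ht.
  assert (Hpropagate : forall x y, rho < x <= y -> (0 < dens x <-> 0 < dens y)).
  { intros x y Hxy.
    set (K := 2 * (Rabs lam + Rabs m * (Rabs x + Rabs y)) / (x - rho)).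
    destruct (gronwall_abs dens K x y) as [Hdecay Hgrow]; [lra| |].
    { intros s Hs. eexists. split; [apply is_derive_dens; lra | apply abs_derive_dens_le; lra]. }
    pose proof (exp_pos (- K * (y - x))). split; intros; nra. }
  destruct (Rle_lt_dec r0 t) as [Hle | Hlt].
  - apply (Hpropagate r0 t); [lra | exact Hpos].
  - apply (Hpropagate t r0); [lra | exact Hpos].
Qed.

End RadialDensity.

Lemma Vrad_expand (a Q e om k rho t : R) :
  Vrad a Q e om k t = Vrad a Q e om k rho + (t - rho) * (om * (t + rho) + e * Q).
Proof. unfold Vrad. ring. Qed.

Section NormalizableRadialSolution.

Variables (rho a Q e om k m lam r0 : R) (x1 y1 x2 y2 : R -> R).

Local Notation V := (Vrad a Q e om k).
Local Notation S := (dens x1 y1 x2 y2).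
Local Notation X := (cross_re x1 y1 x2 y2).
Local Notation J := (mass_current m lam x1 y1 x2 y2).
Local Notation weighted_dens := (fun t => S t * (t ^ 2 + a ^ 2) / (t - rho) ^ 2).

Hypotheses (rho_pos : 0 < rho) (m_pos : 0 < m).
Hypothesis sys : radial_real_system rho m lam V x1 y1 x2 y2.
Hypotheses (r0_gt : rho < r0) (dens_r0_pos : 0 < S r0).

Lemma dens_pos_outside (t : R) : rho < t -> 0 < S t.
Proof. exact (dens_pos rho m lam V x1 y1 x2 y2 sys r0 t r0_gt dens_r0_pos). Qed.

Definition horizon_form (t : R) : R := V t * S t + 2 * (t - rho) * J t.

Lemma is_derive_horizon_form (t : R) : rho < t ->
  is_derive horizon_form t ((2 * om * t + e * Q) * S t + 2 * J t + 2 * m * (t - rho) * X t).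
Proof.
  intros Ht.
  pose proof (is_derive_dens _ _ _ _ _ _ _ _ sys t Ht) as DS.
  pose proof (is_derive_cross_re _ _ _ _ _ _ _ _ sys t Ht) as DX.
  pose proof (is_derive_cross_im _ _ _ _ _ _ _ _ sys t Ht) as DY.
  unfold horizon_form, mass_current, Vrad.
  auto_derive; [repeat split; eexists; eassumption|].
  rewrite (Derive_eq _ _ _ DS), (Derive_eq _ _ _ DX), (Derive_eq _ _ _ DY).
  unfold mass_current, Vrad. field. lra.
Qed.

Definition horizon_const : R :=
  2 * Rabs om * (rho + 1) + Rabs (e * Q) + m * (rho + 2) + Rabs lam.

Lemma horizon_const_ge0 : 0 <= horizon_const.
Proof.
  unfold horizon_const.
  pose proof (Rabs_pos om). pose proof (Rabs_pos (e * Q)). pose proof (Rabs_pos lam). nra.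
Qed.

Lemma horizon_form_close (t : R) : rho < t <= rho + 1 ->
  Rabs (horizon_form t - V rho * S t) <= (t - rho) * horizon_const * S t.
Proof.
  intros Ht.
  pose proof (dens_nonneg x1 y1 x2 y2 t). pose proof (Rabs_pos om).
  pose proof (mass_current_abs_le m lam x1 y1 x2 y2 t ltac:(nra)) as HJ.
  unfold horizon_form. rewrite (Vrad_expand a Q e om k rho t).
  replace ((V rho + (t - rho) * (om * (t + rho) + e * Q)) * S t + 2 * (t - rho) * J t - V rho * S t)
    with ((t - rho) * ((om * (t + rho) + e * Q) * S t + 2 * J t)) by ring.
  rewrite Rabs_mult, (Rabs_pos_eq (t - rho)), Rmult_assoc by lra.
  apply Rmult_le_compat_l; [lra|].
  eapply Rle_trans; [apply Rabs_triang|].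
  rewrite !Rabs_mult, (Rabs_pos_eq (S t)), (Rabs_pos_eq 2) by lra.
  assert (Rabs (om * (t + rho) + e * Q) <= 2 * Rabs om * (rho + 1) + Rabs (e * Q)).
  { eapply Rle_trans; [apply Rabs_triang|].
    rewrite Rabs_mult, (Rabs_pos_eq (t + rho)) by lra. nra. }
  assert (m * t * S t <= m * (rho + 1) * S t) by (apply Rmult_le_compat_r; nra).
  assert (Rabs (om * (t + rho) + e * Q) * S t
          <= (2 * Rabs om * (rho + 1) + Rabs (e * Q)) * S t) by (apply Rmult_le_compat_r; lra).
  unfold horizon_const. nra.
Qed.

Lemma abs_derive_horizon_form_le (t : R) : rho < t <= rho + 1 ->
  Rabs ((2 * om * t + e * Q) * S t + 2 * J t + 2 * m * (t - rho) * X t) <= horizon_const * S t.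
Proof.
  intros Ht.
  pose proof (dens_nonneg x1 y1 x2 y2 t). pose proof (Rabs_pos om).
  pose proof (mass_current_abs_le m lam x1 y1 x2 y2 t ltac:(nra)) as HJ.
  pose proof (two_abs_cross_re_le x1 y1 x2 y2 t) as HX.
  eapply Rle_trans; [apply Rabs_triang|].
  eapply Rle_trans; [apply Rplus_le_compat_r, Rabs_triang|].
  rewrite !Rabs_mult, (Rabs_pos_eq (S t)), (Rabs_pos_eq 2), (Rabs_pos_eq m),
    (Rabs_pos_eq (t - rho)) by lra.
  assert (Rabs (2 * om * t + e * Q) <= 2 * Rabs om * (rho + 1) + Rabs (e * Q)).
  { eapply Rle_trans; [apply Rabs_triang|].
    rewrite !Rabs_mult, (Rabs_pos_eq 2), (Rabs_pos_eq t) by lra. nra. }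
  assert (m * t * S t <= m * (rho + 1) * S t) by (apply Rmult_le_compat_r; nra).
  assert (Rabs (2 * om * t + e * Q) * S t
          <= (2 * Rabs om * (rho + 1) + Rabs (e * Q)) * S t) by (apply Rmult_le_compat_r; lra).
  assert (m * (t - rho) * (2 * Rabs (X t)) <= m * S t).
  { rewrite Rmult_assoc. apply Rmult_le_compat_l; [lra|].
    pose proof (Rabs_pos (X t)). nra. }
  unfold horizon_const. nra.
Qed.

Section HorizonRatio.

Variable delta : R.
Hypotheses (V_rho_neq0 : V rho <> 0) (delta_le1 : delta <= 1)
  (delta_small : delta * horizon_const <= Rabs (V rho) / 2).

Lemma horizon_ratio_comparable (t : R) : rho < t <= rho + delta ->
  S t / 2 <= / V rho * horizon_form t <= 3 * S t / 2.
Proof.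
  intros Ht.
  assert (Hv : 0 < Rabs (V rho)) by (apply Rabs_pos_lt, V_rho_neq0).
  pose proof (horizon_form_close t ltac:(lra)) as Hclose.
  pose proof (dens_nonneg x1 y1 x2 y2 t). pose proof horizon_const_ge0.
  assert (Hsmall : Rabs (/ V rho * horizon_form t - S t) <= S t / 2).
  { replace (/ V rho * horizon_form t - S t) with (/ V rho * (horizon_form t - V rho * S t))
      by (field; exact V_rho_neq0).
    rewrite Rabs_mult, Rabs_inv.
    apply Rmult_le_reg_l with (Rabs (V rho)); [lra|].
    rewrite <- Rmult_assoc, Rinv_r, Rmult_1_l by lra.
    apply Rle_trans with (delta * horizon_const * S t); [|nra].
    apply Rle_trans with ((t - rho) * horizon_const * S t); [lra|].
    apply Rmult_le_compat_r; [lra|]. apply Rmult_le_compat_r; lra. }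
  revert Hsmall. unfold Rabs. destruct Rcase_abs; lra.
Qed.

Lemma horizon_ratio_derive (t : R) : rho < t <= rho + delta ->
  exists d, is_derive (fun s => / V rho * horizon_form s) t d /\
    Rabs d <= 2 * horizon_const / Rabs (V rho) * (/ V rho * horizon_form t).
Proof.
  intros Ht.
  assert (Hv : 0 < Rabs (V rho)) by (apply Rabs_pos_lt, V_rho_neq0).
  pose proof (abs_derive_horizon_form_le t ltac:(lra)) as Hd.
  pose proof (horizon_ratio_comparable t Ht) as [Hlow _].
  pose proof horizon_const_ge0.
  eexists. split; [apply is_derive_scal, is_derive_horizon_form; lra|].
  rewrite Rabs_mult, Rabs_inv.
  replace (2 * horizon_const / Rabs (V rho) * (/ V rho * horizon_form t))
    with (/ Rabs (V rho) * (horizon_const * (2 * (/ V rho * horizon_form t)))) by (field; lra).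
  apply Rmult_le_compat_l; [apply Rlt_le, Rinv_0_lt_compat; lra|].
  eapply Rle_trans; [exact Hd|]. apply Rmult_le_compat_l; lra.
Qed.

Lemma dens_lower_bound_on_horizon_strip : 0 < delta ->
  exists s0, 0 < s0 /\ forall t, rho < t <= rho + delta -> s0 <= S t.
Proof.
  intros Hdelta.
  set (K := 2 * horizon_const / Rabs (V rho)).
  assert (HK : 0 <= K).
  { pose proof horizon_const_ge0. pose proof (Rabs_pos_lt _ V_rho_neq0).
    unfold K. apply Rmult_le_pos; [lra | apply Rlt_le, Rinv_0_lt_compat; lra]. }
  set (psi_end := / V rho * horizon_form (rho + delta)).
  assert (Hend : 0 < psi_end).
  { destruct (horizon_ratio_comparable (rho + delta) ltac:(lra)) as [Hend _].
    pose proof (dens_pos_outside (rho + delta) ltac:(lra)). unfold psi_end. lra. }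
  exists (2 / 3 * psi_end * exp (- K * delta)).
  split; [apply Rmult_lt_0_compat; [lra | apply exp_pos]|].
  intros t Ht.
  destruct (gronwall_abs (fun s => / V rho * horizon_form s) K t (rho + delta)) as [Hgron _];
    [lra | intros s Hs; apply horizon_ratio_derive; lra|].
  destruct (horizon_ratio_comparable t Ht) as [_ Hup].
  assert (exp (- K * delta) <= exp (- K * (rho + delta - t))) by (apply exp_le_mono; nra).
  assert (psi_end * exp (- K * delta) <= psi_end * exp (- K * (rho + delta - t)))
    by (apply Rmult_le_compat_l; lra).
  cbv beta in Hgron. fold psi_end in Hgron. lra.
Qed.

End HorizonRatio.

Lemma dens_lower_bound_near_horizon : V rho <> 0 ->
  exists s0 delta, 0 < s0 /\ 0 < delta /\ forall t, rho < t < rho + delta -> s0 <= S t.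
Proof.
  intros Hv.
  pose proof horizon_const_ge0 as HL. pose proof (Rabs_pos_lt _ Hv) as Hav.
  set (L := horizon_const) in *. set (v := Rabs (V rho)) in *.
  set (delta := v / (2 * (L + v))).
  assert (Hdelta0 : 0 < delta) by (apply Rdiv_lt_0_compat; lra).
  assert (Hdelta1 : delta <= 1).
  { apply Rmult_le_reg_r with (2 * (L + v)); [lra|].
    unfold delta, Rdiv. rewrite Rmult_assoc, Rinv_l, Rmult_1_r by lra. lra. }
  assert (Hsmall : delta * L <= v / 2).
  { apply Rmult_le_reg_r with (2 * (L + v)); [lra|].
    replace (delta * L * (2 * (L + v))) with (v * L) by (unfold delta; field; lra).
    nra. }
  destruct (dens_lower_bound_on_horizon_strip delta Hv Hdelta1 Hsmall Hdelta0) as [s0 [Hs0 Hlow]].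
  exists s0, delta. split; [exact Hs0 | split; [exact Hdelta0|]].
  intros t Ht. apply Hlow. lra.
Qed.

Hypothesis integrable :
  ex_RInt_gen weighted_dens (at_right rho) (Rbar_locally p_infty).

Lemma Vrad_horizon_eq0 : V rho = 0.
Proof.
  destruct (Req_dec (V rho) 0) as [|Hv]; [assumption | exfalso].
  destruct (dens_lower_bound_near_horizon Hv) as (s0 & delta & Hs0 & Hdelta & Hlow).
  apply (not_ex_RInt_gen_at_right_inv_sq weighted_dens rho (s0 * rho ^ 2) delta);
    [apply Rmult_lt_0_compat; [lra | apply pow_lt; lra] | lra | | exact integrable].
  intros t Ht. unfold Rdiv.
  apply Rmult_le_compat_r; [apply Rlt_le, Rinv_0_lt_compat, pow_lt; lra|].
  apply Rmult_le_compat; [lra | nra | apply Hlow; lra | nra].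
Qed.

Definition far_form (t : R) : R := (om * (t + rho) + e * Q) * S t + 2 * J t.

Lemma is_derive_far_form (t : R) : V rho = 0 -> rho < t ->
  is_derive far_form t (om * S t + 2 * m * X t).
Proof.
  intros Hv0 Ht.
  pose proof (is_derive_dens _ _ _ _ _ _ _ _ sys t Ht) as DS.
  pose proof (is_derive_cross_re _ _ _ _ _ _ _ _ sys t Ht) as DX.
  pose proof (is_derive_cross_im _ _ _ _ _ _ _ _ sys t Ht) as DY.
  unfold far_form, mass_current.
  auto_derive; [repeat split; eexists; eassumption|].
  rewrite (Derive_eq _ _ _ DS), (Derive_eq _ _ _ DX), (Derive_eq _ _ _ DY).
  rewrite (Vrad_expand a Q e om k rho t), Hv0.
  unfold mass_current. field. lra.
Qed.

Lemma far_ratio_nondecreasing (s t : R) : V rho = 0 -> m <= Rabs om -> rho < s <= t ->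
  / om * far_form s <= / om * far_form t.
Proof.
  intros Hv0 Hom Hst.
  assert (Hom0 : om <> 0) by (intros E; rewrite E, Rabs_R0 in Hom; lra).
  apply (nondecreasing_of_derive_nonneg (fun u => / om * far_form u)); [lra|]. intros u Hu.
  exists (/ om * (om * S u + 2 * m * X u)).
  split; [apply is_derive_scal, is_derive_far_form; lra|].
  replace (/ om * (om * S u + 2 * m * X u)) with (S u + m / om * (2 * X u))
    by (field; exact Hom0).
  assert (Hratio : Rabs (m / om) <= 1).
  { unfold Rdiv. rewrite Rabs_mult, Rabs_inv, (Rabs_pos_eq m) by lra.
    apply Rmult_le_reg_r with (Rabs om); [lra|].
    rewrite Rmult_assoc, Rinv_l, Rmult_1_l, Rmult_1_r by lra. exact Hom. }
  pose proof (two_abs_cross_re_le x1 y1 x2 y2 u) as HX.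
  assert (Rabs (m / om * (2 * X u)) <= S u).
  { rewrite Rabs_mult, Rabs_mult, (Rabs_pos_eq 2) by lra.
    pose proof (Rabs_pos (m / om)). pose proof (Rabs_pos (X u)). nra. }
  pose proof (Rle_abs (- (m / om * (2 * X u)))) as Hneg.
  rewrite Rabs_Ropp in Hneg. lra.
Qed.

Lemma far_ratio_pos (t : R) : e * Q = 0 -> m <= Rabs om ->
  rho + lam ^ 2 / (2 * m ^ 2 * rho) < t -> 0 < / om * far_form t.
Proof.
  intros HeQ Hom Ht.
  assert (Hom0 : om <> 0) by (intros E; rewrite E, Rabs_R0 in Hom; lra).
  assert (Hm2 : 0 < 2 * m ^ 2 * rho) by (pose proof (pow_lt m 2 m_pos); nra).
  assert (0 <= lam ^ 2 / (2 * m ^ 2 * rho)) by (apply Rdiv_le_0_compat; [apply pow2_ge_0 | lra]).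
  assert (Hlam : lam ^ 2 < 2 * m ^ 2 * rho * t).
  { replace (lam ^ 2) with (2 * m ^ 2 * rho * (lam ^ 2 / (2 * m ^ 2 * rho))) by (field; lra).
    apply Rmult_lt_compat_l; lra. }
  pose proof (dens_pos_outside t ltac:(lra)) as HS.
  (* Cauchy-Schwarz: |2 J| <= sqrt (m^2 t^2 + lam^2) S < m (t + rho) S <= |om| (t + rho) S *)
  assert (HJ : Rabs (2 * J t) < Rabs (om * (t + rho) * S t)).
  { apply Rsqr_lt_abs_0. rewrite !Rsqr_pow2.
    pose proof (mass_current_sq_le m lam x1 y1 x2 y2 t) as Hsq.
    apply Rle_lt_trans with (((m * t) ^ 2 + lam ^ 2) * S t ^ 2); [lra|].
    replace ((om * (t + rho) * S t) ^ 2) with ((om * (t + rho)) ^ 2 * S t ^ 2) by ring.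
    apply Rmult_lt_compat_r; [apply pow_lt; lra|].
    apply Rlt_le_trans with ((m * (t + rho)) ^ 2); [nra|].
    rewrite !Rpow_mult_distr, <- (pow2_abs om).
    apply Rmult_le_compat_r; [apply pow2_ge_0|]. apply pow_incr. lra. }
  unfold far_form. rewrite HeQ, Rplus_0_r.
  replace (/ om * (om * (t + rho) * S t + 2 * J t)) with ((t + rho) * S t + / om * (2 * J t))
    by (field; exact Hom0).
  rewrite !Rabs_mult, (Rabs_pos_eq 2), (Rabs_pos_eq (t + rho)), (Rabs_pos_eq (S t)) in HJ by lra.
  assert (Hinv : Rabs (/ om * (2 * J t)) < (t + rho) * S t).
  { rewrite Rabs_mult, Rabs_inv.
    apply Rmult_lt_reg_l with (Rabs om); [apply Rabs_pos_lt, Hom0|].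
    rewrite <- Rmult_assoc, Rinv_r, Rmult_1_l by (apply Rabs_no_R0, Hom0).
    rewrite Rabs_mult, (Rabs_pos_eq 2) by lra. lra. }
  pose proof (Rle_abs (- (/ om * (2 * J t)))) as Hneg. rewrite Rabs_Ropp in Hneg. lra.
Qed.

Lemma far_ratio_le (t : R) : e * Q = 0 -> m <= Rabs om -> 1 <= t ->
  / om * far_form t <= (2 + rho + Rabs lam / m) * t * S t.
Proof.
  intros HeQ Hom Ht.
  assert (Hom0 : om <> 0) by (intros E; rewrite E, Rabs_R0 in Hom; lra).
  pose proof (dens_nonneg x1 y1 x2 y2 t) as HS.
  pose proof (mass_current_abs_le m lam x1 y1 x2 y2 t ltac:(nra)) as HJ.
  unfold far_form. rewrite HeQ, Rplus_0_r.
  replace (/ om * (om * (t + rho) * S t + 2 * J t)) with ((t + rho) * S t + / om * (2 * J t))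
    by (field; exact Hom0).
  assert (Hinv : / om * (2 * J t) <= (t + Rabs lam / m) * S t).
  { eapply Rle_trans; [apply Rle_abs|].
    rewrite Rabs_mult, Rabs_inv, Rabs_mult, (Rabs_pos_eq 2) by lra.
    apply Rle_trans with (/ m * ((m * t + Rabs lam) * S t)).
    - pose proof (Rabs_pos_lt _ Hom0). pose proof (Rabs_pos (J t)).
      apply Rmult_le_compat; [apply Rlt_le, Rinv_0_lt_compat; lra | lra | | lra].
      apply Rinv_le_contravar; lra.
    - right. field. lra. }
  pose proof (Rdiv_le_0_compat _ _ (Rabs_pos lam) m_pos).
  assert (Rabs lam / m <= Rabs lam / m * t) by nra.
  assert (rho <= rho * t) by nra.
  assert ((t + rho) + (t + Rabs lam / m) <= (2 + rho + Rabs lam / m) * t) by nra.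
  assert (((t + rho) + (t + Rabs lam / m)) * S t <= (2 + rho + Rabs lam / m) * t * S t)
    by (apply Rmult_le_compat_r; lra).
  lra.
Qed.

Lemma dens_lower_bound_at_infinity : V rho = 0 -> e * Q = 0 -> m <= Rabs om ->
  exists c T, 0 < c /\ forall t, T < t -> c / t <= S t.
Proof.
  intros Hv0 HeQ Hom.
  set (T := rho + lam ^ 2 / (2 * m ^ 2 * rho) + 1).
  assert (0 <= lam ^ 2 / (2 * m ^ 2 * rho))
    by (apply Rdiv_le_0_compat; [apply pow2_ge_0 | pose proof (pow_lt m 2 m_pos); nra]).
  assert (HT : rho + lam ^ 2 / (2 * m ^ 2 * rho) < T /\ 1 <= T) by (unfold T; lra).
  set (C := 2 + rho + Rabs lam / m).
  assert (HC : 0 < C) by (unfold C; pose proof (Rdiv_le_0_compat _ _ (Rabs_pos lam) m_pos); lra).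
  pose proof (far_ratio_pos T HeQ Hom ltac:(lra)) as HpT.
  exists (/ om * far_form T / C), T. split; [apply Rdiv_lt_0_compat; lra|].
  intros t Ht.
  pose proof (far_ratio_nondecreasing T t Hv0 Hom ltac:(lra)).
  pose proof (far_ratio_le t HeQ Hom ltac:(lra)).
  apply Rmult_le_reg_r with (C * t); [nra|].
  set (p := / om * far_form T) in *.
  replace (p / C / t * (C * t)) with p by (field; lra).
  unfold C in *. lra.
Qed.

Lemma abs_omega_lt_mass : e * Q = 0 -> Rabs om < m.
Proof.
  intros HeQ.
  destruct (Rlt_le_dec (Rabs om) m) as [|Hom]; [assumption | exfalso].
  destruct (dens_lower_bound_at_infinity Vrad_horizon_eq0 HeQ Hom) as (c & T & Hc & Hlow).
  apply (not_ex_RInt_gen_pinfty_inv (Fa := at_right rho) weighted_dens c (Rmax T rho));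
    [exact Hc | | exact integrable].
  intros t Ht. pose proof (Rmax_l T rho). pose proof (Rmax_r T rho).
  apply Rle_trans with (S t); [apply Hlow; lra|].
  pose proof (dens_nonneg x1 y1 x2 y2 t).
  apply Rmult_le_reg_r with ((t - rho) ^ 2); [apply pow_lt; lra|].
  unfold Rdiv. rewrite Rmult_assoc, Rinv_l, Rmult_1_r by (apply pow_nonzero; lra).
  apply Rmult_le_compat_l; [lra|]. nra.
Qed.

End NormalizableRadialSolution.

Lemma radial_solution_real_system (M a Q m e k om lam : R) (f1 f2 : R -> C) :
  radial_solution M a Q m e k om lam f1 f2 ->
  radial_real_system M m lam (Vrad a Q e om k)
    (fun t => Re (f1 t)) (fun t => Im (f1 t)) (fun t => Re (f2 t)) (fun t => Im (f2 t)).
Proof.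
  intros Hrad t Ht.
  destruct (Hrad t Ht) as [d1 [d2 [[Hx1 Hy1] [[Hx2 Hy2] [E1 E2]]]]].
  assert (Hu : t - M <> 0) by lra.
  pose proof (f_equal Re E1) as E1r. pose proof (f_equal Im E1) as E1i.
  pose proof (f_equal Re E2) as E2r. pose proof (f_equal Im E2) as E2i.
  set (W := Vrad a Q e om k t / (t - M)) in *.
  destruct d1 as [p1 q1], d2 as [p2 q2], (f1 t) as [u1 v1], (f2 t) as [u2 v2].
  simpl in *.
  refine (conj _ (conj _ (conj _ _)));
    [ eapply (is_derive_eq_value _ _ _ _ Hx1) | eapply (is_derive_eq_value _ _ _ _ Hy1)
    | eapply (is_derive_eq_value _ _ _ _ Hx2) | eapply (is_derive_eq_value _ _ _ _ Hy2) ];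
    (apply eq_div_of_mul_eq; [exact Hu | lra]).
Qed.

Lemma normsq2_eq (z1 z2 : C) : normsq2 z1 z2 = Re z1 ^ 2 + Im z1 ^ 2 + Re z2 ^ 2 + Im z2 ^ 2.
Proof. unfold normsq2. rewrite !Cmod2_alt. ring. Qed.

Lemma normsq2_pos (z1 z2 : C) : z1 <> 0%C \/ z2 <> 0%C -> 0 < normsq2 z1 z2.
Proof.
  unfold normsq2. pose proof (pow2_ge_0 (Cmod z1)). pose proof (pow2_ge_0 (Cmod z2)).
  intros [Hz | Hz]; apply Cmod_gt_0 in Hz; pose proof (pow_lt _ 2 Hz); lra.
Qed.

Lemma half_integer_abs_ge (k : R) : half_integer k -> / 2 <= Rabs k.
Proof.
  intros [n ->].
  destruct (Z_lt_le_dec n 0) as [Hn | Hn].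
  - assert (IZR n <= -1) by (apply IZR_le; lia). rewrite Rabs_left; lra.
  - apply IZR_le in Hn. rewrite Rabs_pos_eq; lra.
Qed.

Lemma extreme_Kerr_abs_k_of_Vrad_eq0 (M a e om k : R) : 0 < M -> M = Rabs a ->
  Vrad a 0 e om k M = 0 -> Rabs k = 2 * M * Rabs om.
Proof.
  intros HM HMa Hv. unfold Vrad in Hv.
  assert (Ha : a ^ 2 = M ^ 2) by (rewrite HMa, pow2_abs; reflexivity).
  rewrite Ha in Hv.
  assert (Hka : k * a = - (2 * M ^ 2 * om)) by lra.
  apply Rmult_eq_reg_r with M; [|lra].
  replace (Rabs k * M) with (Rabs (k * a)) by (rewrite Rabs_mult, <- HMa; reflexivity).
  rewrite Hka, Rabs_Ropp, Rabs_mult, (Rabs_pos_eq (2 * M ^ 2)) by nra.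
  ring.
Qed.

Theorem mainTheorem9 (M a Q m e k omega : R) :
  0 < M -> M ^ 2 = a ^ 2 + Q ^ 2 ->
  Q = 0 -> M = Rabs a ->
  0 < m -> half_integer k ->
  energy_eigenvalue M a Q m e k omega ->
  M * m > / 4.
Proof.
  intros HM _ -> HMa Hm Hk (lam & f1 & f2 & _ & _ & Hrad & (r0 & Hr0 & Hnz) & Hint & _).
  set (x1 := fun t => Re (f1 t)). set (y1 := fun t => Im (f1 t)).
  set (x2 := fun t => Re (f2 t)). set (y2 := fun t => Im (f2 t)).
  pose proof (radial_solution_real_system _ _ _ _ _ _ _ _ _ _ Hrad) as Hsys.
  assert (Hpos : 0 < dens x1 y1 x2 y2 r0).
  { pose proof (normsq2_pos _ _ Hnz) as Hn. rewrite normsq2_eq in Hn. exact Hn. }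
  assert (Hint' : ex_RInt_gen (fun t => dens x1 y1 x2 y2 t * (t ^ 2 + a ^ 2) / (t - M) ^ 2)
                    (at_right M) (Rbar_locally p_infty)).
  { refine (ex_RInt_gen_ext_eq _ _ _ Hint). intros t. rewrite normsq2_eq. reflexivity. }
  pose proof (Vrad_horizon_eq0 _ _ _ _ _ _ _ _ _ _ _ _ _ HM Hm Hsys Hr0 Hpos Hint') as Hv0.
  pose proof (abs_omega_lt_mass _ _ _ _ _ _ _ _ _ _ _ _ _ HM Hm Hsys Hr0 Hpos Hint'
                (Rmult_0_r e)) as Hom.
  pose proof (extreme_Kerr_abs_k_of_Vrad_eq0 M a e omega k HM HMa Hv0) as Hres.
  pose proof (half_integer_abs_ge k Hk).
  nra.
Qed.
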